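(* (a) For every finite abelian group $G$, every rate $k/l$ achievable by a $(k,l)$ fractional network code over $G$ on $\mathcal{S}_3$ or on $\mathcal{S}_3'$ satisfies $k/l\le 2/3$. (b) Over every finite field $F$, both the capacity and the linear coding capacity of $\mathcal{S}_3$ and of $\mathcal{S}_3'$ equal $2/3$. (Note that every source-terminal pair in these networks has min-cut at least $1$.)
   Context: The sum-network $\mathcal{S}_3$ has sources $s_1,s_2,s_3$, terminals $t_1,t_2,t_3$, intermediate nodes $u_1,v_1,u_2,v_2$, and the twelve edges $(s_1,u_1),(s_3,u_1),(u_1,v_1),(v_1,t_1),(v_1,t_3),(s_2,u_2),(s_3,u_2),(u_2,v_2),(v_2,t_2),(v_2,t_3),(s_2,t_1),(s_1,t_2)$. The network $\mathcal{S}_3'$ is obtained from $\mathcal{S}_3$ by adding an edge $(s_1,t_1)$, and replacing the edge $(s_2,t_1)$ by a new node $u_3$ with edges $(s_2,u_3),(u_3,t_1)$ and an additional edge $(s_1,u_3)$. A $(k,l)$ fractional network code over alphabet $A$: each source $s_i$ holds $X_i\in A^k$ and sends on each outgoing edge a function $A^k\to A^l$ of $X_i$; each edge whose tail $v$ is not a source carries a function $A^{l|In(v)|}\to A^l$ of the vectors on the incoming edges of $v$; each terminal applies a decoding function $A^{l|In(t)|}\to A^k$. It is a solution if every terminal outputs $X_1+X_2+X_3$ (componentwise sum) for all messages. Rate $k/l$ is achievable if a $(k,l)$ fractional solution exists; the capacity is the supremum of achievable rates; for a field $F$, a code is linear if all functions are $F$-linear and the linear coding capacity is the supremum of rates of linear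 solutions. *)

From HB Require Import structures.
From mathcomp Require Import all_boot all_order all_algebra.
Set Implicit Arguments. Unset Strict Implicit. Unset Printing Implicit Defensive.
Import Order.TTheory GRing.Theory Num.Theory.
Local Open Scope ring_scope.

Record network := Network {
  edges : seq (nat * nat);
  sources : seq nat;
  terminals : seq nat }.

Definition edge (N : network) := 'I_(size (edges N)).
Definition tail (N : network) (e : edge N) : nat := (nth (0, 0)%N (edges N) e).1.
Definition head (N : network) (e : edge N) : nat := (nth (0, 0)%N (edges N) e).2.
Definition src (N : network) (i : 'I_(size (sources N))) : nat := nth 0%N (sources N) i.
Definition term (N : network) (j : 'I_(size (terminals N))) : nat := nth 0%N (terminals N) j.

(* Node numbering: s1=0 s2=1 s3=2 t1=3 t2=4 t3=5 u1=6 v1=7 u2=8 v2=9 u3=10 *)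
Definition S3 : network := Network
  [:: (0,6); (2,6); (6,7); (7,3); (7,5);
      (1,8); (2,8); (8,9); (9,4); (9,5);
      (1,3); (0,4)]%N
  [:: 0; 1; 2]%N [:: 3; 4; 5]%N.

(* S3': add (s1,t1); replace (s2,t1) by node u3 with (s2,u3),(u3,t1),(s1,u3). *)
Definition S3' : network := Network
  [:: (0,6); (2,6); (6,7); (7,3); (7,5);
      (1,8); (2,8); (8,9); (9,4); (9,5);
      (0,4); (0,3); (1,10); (10,3); (0,10)]%N
  [:: 0; 1; 2]%N [:: 3; 4; 5]%N.

(* The vector of values on the incoming edges of node v (other coordinates
   set to 0): a function of it is exactly a function A^{l|In(v)|} -> ... *)
Definition in_vals (N : network) (A : zmodType) (l : nat) (v : nat)
  (y : edge N -> 'rV[A]_l) : {ffun edge N -> 'rV[A]_l} :=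
  [ffun e => if head e == v then y e else 0].

Record frac_code (N : network) (A : zmodType) (k l : nat) := FracCode {
  (* used on edges whose tail is a source: function of that source's message *)
  enc : edge N -> 'rV[A]_k -> 'rV[A]_l;
  (* used on edges whose tail is not a source: function of incoming edges *)
  fn : edge N -> {ffun edge N -> 'rV[A]_l} -> 'rV[A]_l;
  dec : 'I_(size (terminals N)) -> {ffun edge N -> 'rV[A]_l} -> 'rV[A]_k }.

Definition messages (N : network) (A : zmodType) (k : nat) :=
  'I_(size (sources N)) -> 'rV[A]_k.

(* The code is a solution: the (unique, the network being acyclic) edge
   values y X e consistent with the local functions make every terminal
   output the sum of all source messages, for all messages X. *)
Definition is_solution (N : network) (A : zmodType) (k l : nat)
  (c : frac_code N A k l) : Prop :=
  exists y : messages N A k -> edge N -> 'rV[A]_l,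
  forall X : messages N A k,
    (forall (e : edge N) (i : 'I_(size (sources N))),
        tail e = src i -> y X e = enc c e (X i)) /\
    (forall e : edge N, tail e \notin sources N ->
        y X e = fn c e (in_vals (tail e) (y X))) /\
    (forall j : 'I_(size (terminals N)),
        dec c j (in_vals (term j) (y X)) = \sum_i X i).

Definition is_linear_map (F : fieldType) (U V : lmodType F) (f : U -> V) :=
  forall (a : F) (x y : U), f (a *: x + y) = a *: f x + f y.

Definition is_linear_code (N : network) (F : fieldType) (k l : nat)
  (c : frac_code N F k l) : Prop :=
  (forall e, is_linear_map (enc c e)) /\
  (forall e, is_linear_map (fn c e)) /\
  (forall j, is_linear_map (dec c j)).

Definition achievable (N : network) (A : zmodType) (k l : nat) : Prop :=
  exists c : frac_code N A k l, is_solution c.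

Definition linearly_achievable (N : network) (F : fieldType) (k l : nat) : Prop :=
  exists c : frac_code N F k l, is_linear_code c /\ is_solution c.

Definition is_sup_rate (P : nat -> nat -> Prop) (c : rat) : Prop :=
  (forall k l : nat, (0 < l)%N -> P k l -> k%:R / l%:R <= c) /\
  (forall d : rat, (forall k l : nat, (0 < l)%N -> P k l -> k%:R / l%:R <= d) ->
     c <= d).

(* In both networks the two
   edges A = (u1,v1) and B = (u2,v2) form a bottleneck for the sum: the value
   on A is a function of (X1,X3), the value on B of (X2,X3); terminal t3 sees
   only A and B, t2 sees only B and X1, t1 sees only A, X1 and X2.  These five
   dependency facts ([sum_bottleneck]) force the map (X1,X2,X3) |-> (A,B) to be
   injective, so |G|^(3k) <= |G|^(2l), i.e. 3k <= 2l.

   Lower bound: over every field a linear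
   (2,3) code is exhibited on each network (X1 and X2 are sent uncoded, A and
   B carry two different linear mixes of X3 added to X1 resp. X2). *)
From Pilot Require Import Defs.
From HB Require Import structures.
From mathcomp Require Import all_boot all_order all_algebra.
From mathcomp Require Import finfield.
Set Implicit Arguments. Unset Strict Implicit. Unset Printing Implicit Defensive.
Import Order.TTheory GRing.Theory Num.Theory.
Local Open Scope ring_scope.

Definition i0 : 'I_3 := @Ordinal 3 0 isT.
Definition i1 : 'I_3 := @Ordinal 3 1 isT.
Definition i2 : 'I_3 := @Ordinal 3 2 isT.

Lemma ord3_cases (P : 'I_3 -> Prop) : P i0 -> P i1 -> P i2 -> forall i, P i.
Proof.
move=> p0 p1 p2 [[|[|[|m]]] hm] //.
- by rewrite (_ : Ordinal hm = i0) //; apply: val_inj.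
- by rewrite (_ : Ordinal hm = i1) //; apply: val_inj.
- by rewrite (_ : Ordinal hm = i2) //; apply: val_inj.
Qed.

Lemma sum3 (V : zmodType) (f : 'I_3 -> V) : \sum_i f i = f i0 + f i1 + f i2.
Proof.
rewrite !big_ord_recl big_ord0 addr0 addrA.
by congr (f _ + f _ + f _); apply: val_inj.
Qed.

Definition msg3 (T : Type) (x1 x2 x3 : T) : 'I_3 -> T :=
  fun i => if val i == 0%N then x1 else if val i == 1%N then x2 else x3.

Section Bottleneck.
Variables (G : zmodType) (k l : nat).
Variables (A B : ('I_3 -> 'rV[G]_k) -> 'rV[G]_l).

Definition sum_bottleneck : Prop :=
  [/\ forall X X', X i0 = X' i0 -> X i2 = X' i2 -> A X = A X',
      forall X X', X i1 = X' i1 -> X i2 = X' i2 -> B X = B X',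
      forall X X', A X = A X' -> B X = B X' -> \sum_i X i = \sum_i X' i,
      forall X X', B X = B X' -> X i0 = X' i0 -> \sum_i X i = \sum_i X' i
    & forall X X', A X = A X' -> X i0 = X' i0 -> X i1 = X' i1 ->
        \sum_i X i = \sum_i X' i].

(* Under these facts the pair (A X, B X) determines all three messages:
   comparing X with the hybrid messages (x1,x2',x3') and (x1,x2,x3') recovers
   x1, then x3, and finally x2 from the sum. *)
Lemma bottleneck_injective (X X' : 'I_3 -> 'rV[G]_k) :
  sum_bottleneck -> A X = A X' -> B X = B X' -> X =1 X'.
Proof.
case=> LA LB T3 T2 T1 hA hB.
have hsum := T3 _ _ hA hB; rewrite !sum3 in hsum.
pose W := msg3 (X i0) (X' i1) (X' i2).
have hBW : B X = B W by rewrite hB; apply: LB.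
have := T2 _ W hBW erefl; rewrite !sum3 /W /msg3 /= => hW.
have e0 : X i0 = X' i0.
  by apply: (@addIr _ (X' i1 + X' i2)); rewrite !addrA -hW hsum.
pose V := msg3 (X i0) (X i1) (X' i2).
have hAV : A X = A V by rewrite hA; apply: LA; rewrite /V /msg3 /= ?e0.
have := T1 _ V hAV erefl erefl; rewrite !sum3 /V /msg3 /= => hV.
have e2 : X i2 = X' i2 by apply: (@addrI _ (X i0 + X i1)).
have e1 : X i1 = X' i1.
  by apply: (@addIr _ (X i2)); apply: (@addrI _ (X i0)); rewrite !addrA hsum e0 e2.
by apply: ord3_cases.
Qed.

End Bottleneck.

Lemma bottleneck_rate (G : finZmodType) (k l : nat)
    (A B : ('I_3 -> 'rV[G]_k) -> 'rV[G]_l) :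
  (1 < #|G|)%N -> sum_bottleneck A B -> (3 * k <= 2 * l)%N.
Proof.
move=> hG hAB.
pose f (t : 'rV[G]_k * 'rV[G]_k * 'rV[G]_k) :=
  (A (msg3 t.1.1 t.1.2 t.2), B (msg3 t.1.1 t.1.2 t.2)).
have f_inj : injective f.
  move=> [[x1 x2] x3] [[x1' x2'] x3'] [hA hB].
  have e := bottleneck_injective hAB hA hB.
  by move: (e i0) (e i1) (e i2); rewrite /msg3 /= => -> -> ->.
have := leq_card f f_inj.
rewrite !card_prod !card_mx -!expnD leq_exp2l //.
by rewrite !mul1n !mul2n -addnn !mulSn mul0n addn0 addnA.
Qed.

(* A code together with the edge values it induces; [is_solution c] is
   exactly the existence of such a [y]. *)
Definition solves (N : network) (A : zmodType) (k l : nat)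
  (c : frac_code N A k l) (y : messages N A k -> edge N -> 'rV[A]_l) :=
  forall X : messages N A k,
    (forall (e : edge N) (i : 'I_(size (sources N))),
        Defs.tail e = src i -> y X e = enc c e (X i)) /\
    (forall e : edge N, Defs.tail e \notin sources N ->
        y X e = fn c e (in_vals (Defs.tail e) (y X))) /\
    (forall j : 'I_(size (terminals N)),
        dec c j (in_vals (term j) (y X)) = \sum_i X i).

Section InformationFlow.
Variables (N : network) (A : zmodType) (k l : nat) (c : frac_code N A k l).
Variables (y : messages N A k -> edge N -> 'rV[A]_l) (hy : solves c y).

Lemma in_vals_eq (v : nat) (z z' : edge N -> 'rV[A]_l) :
  (forall e, Defs.head e == v -> z e = z' e) -> in_vals v z = in_vals v z'.
Proof. by move=> h; apply/ffunP=> e; rewrite !ffunE; case: ifP => // /h ->. Qed.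

Lemma value_from_source (X X' : messages N A k) (e : edge N)
    (i : 'I_(size (sources N))) :
  Defs.tail e = src i -> X i = X' i -> y X e = y X' e.
Proof.
move=> ht hX; have [h _] := hy X; have [h' _] := hy X'.
by rewrite (h e i ht) (h' e i ht) hX.
Qed.

Lemma value_from_inputs (X X' : messages N A k) (e : edge N) :
  Defs.tail e \notin sources N ->
  (forall e', Defs.head e' == Defs.tail e -> y X e' = y X' e') ->
  y X e = y X' e.
Proof.
move=> ht h; have [_ [g _]] := hy X; have [_ [g' _]] := hy X'.
by rewrite g // g' //; congr (fn c e _); apply: in_vals_eq.
Qed.

Lemma sum_from_terminal_inputs (X X' : messages N A k)
    (j : 'I_(size (terminals N))) :
  (forall e', Defs.head e' == term j -> y X e' = y X' e') ->
  \sum_i X i = \sum_i X' i.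
Proof.
move=> h; have [_ [_ g]] := hy X; have [_ [_ g']] := hy X'.
by rewrite -(g j) -(g' j); congr (dec c j _); apply: in_vals_eq.
Qed.

End InformationFlow.

Notation "'E3' m" := (@Ordinal (size (edges S3)) m isT) (at level 0, m at level 0).
Notation "'E3'' m" := (@Ordinal (size (edges S3')) m isT) (at level 0, m at level 0).

Lemma S3_edge_cases (P : edge S3 -> Prop) :
  P (E3 0) -> P (E3 1) -> P (E3 2) -> P (E3 3) -> P (E3 4) -> P (E3 5) ->
  P (E3 6) -> P (E3 7) -> P (E3 8) -> P (E3 9) -> P (E3 10) -> P (E3 11) ->
  forall e, P e.
Proof.
move=> p0 p1 p2 p3 p4 p5 p6 p7 p8 p9 p10 p11 [m hm].
do 12 (case: m hm => [|m] hm; first by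
  match goal with |- P (Ordinal (m:=?n) _) =>
    have -> : Ordinal hm = E3 n by apply: val_inj end).
by [].
Qed.

Lemma S3'_edge_cases (P : edge S3' -> Prop) :
  P (E3' 0) -> P (E3' 1) -> P (E3' 2) -> P (E3' 3) -> P (E3' 4) -> P (E3' 5) ->
  P (E3' 6) -> P (E3' 7) -> P (E3' 8) -> P (E3' 9) -> P (E3' 10) -> P (E3' 11) ->
  P (E3' 12) -> P (E3' 13) -> P (E3' 14) ->
  forall e, P e.
Proof.
move=> p0 p1 p2 p3 p4 p5 p6 p7 p8 p9 p10 p11 p12 p13 p14 [m hm].
do 15 (case: m hm => [|m] hm; first by
  match goal with |- P (Ordinal (m:=?n) _) =>
    have -> : Ordinal hm = E3' n by apply: val_inj end).
by [].
Qed.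

(* Routine bookkeeping of the dependency facts: split over the edges entering
   a node, discard those with another head, and justify each remaining value
   by an equal source message, a hypothesis, or one more upstream step. *)
Ltac edge_split :=
  first [apply: S3_edge_cases | apply: S3'_edge_cases];
  rewrite /Defs.head /Defs.tail /=; try done.

Ltac from_source hy := first
  [ apply: (value_from_source hy (i := i0)); [by [] | assumption]
  | apply: (value_from_source hy (i := i1)); [by [] | assumption]
  | apply: (value_from_source hy (i := i2)); [by [] | assumption] ].

Ltac upstream hy := move=> _; first
  [ assumption
  | from_source hy
  | apply: (value_from_inputs hy) => //; edge_split;
    move=> _; first [assumption | from_source hy] ].

(* The edges (u1,v1) and (u2,v2) are a bottleneck in S3 and in S3'. *)
Lemma S3_bottleneck (G : zmodType) (k l : nat) (c : frac_code S3 G k l)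
    (y : messages S3 G k -> edge S3 -> 'rV[G]_l) :
  solves c y -> sum_bottleneck (fun X => y X (E3 2)) (fun X => y X (E3 7)).
Proof.
move=> hy; split=> X X'.
- by move=> h0 h2; apply: (value_from_inputs hy) => //; edge_split; upstream hy.
- by move=> h1 h2; apply: (value_from_inputs hy) => //; edge_split; upstream hy.
- by move=> hA hB; apply: (sum_from_terminal_inputs hy (j := i2)); edge_split; upstream hy.
- by move=> hB h0; apply: (sum_from_terminal_inputs hy (j := i1)); edge_split; upstream hy.
- move=> hA h0 h1.
  by apply: (sum_from_terminal_inputs hy (j := i0)); edge_split; upstream hy.
Qed.

Lemma S3'_bottleneck (G : zmodType) (k l : nat) (c : frac_code S3' G k l)
    (y : messages S3' G k -> edge S3' -> 'rV[G]_l) :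
  solves c y -> sum_bottleneck (fun X => y X (E3' 2)) (fun X => y X (E3' 7)).
Proof.
move=> hy; split=> X X'.
- by move=> h0 h2; apply: (value_from_inputs hy) => //; edge_split; upstream hy.
- by move=> h1 h2; apply: (value_from_inputs hy) => //; edge_split; upstream hy.
- by move=> hA hB; apply: (sum_from_terminal_inputs hy (j := i2)); edge_split; upstream hy.
- by move=> hB h0; apply: (sum_from_terminal_inputs hy (j := i1)); edge_split; upstream hy.
- move=> hA h0 h1.
  by apply: (sum_from_terminal_inputs hy (j := i0)); edge_split; upstream hy.
Qed.

Lemma achievable_rate_bound (G : finZmodType) (N : network) (k l : nat) :
  (1 < #|G|)%N -> N = S3 \/ N = S3' -> achievable N G k l -> (3 * k <= 2 * l)%N.
Proof.
move=> hG [->|->] [c [y hy]].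
- exact: bottleneck_rate hG (S3_bottleneck hy).
- exact: bottleneck_rate hG (S3'_bottleneck hy).
Qed.

Lemma rate_le_two_thirds (k l : nat) : (0 < l)%N -> (3 * k <= 2 * l)%N ->
  (k%:R / l%:R : rat) <= 2%:R / 3%:R.
Proof.
move=> hl h; rewrite ler_pdivrMr ?ltr0n // mulrAC ler_pdivlMr ?ltr0n //.
by rewrite -!natrM ler_nat mulnC.
Qed.

Section LinearCodes.
Variable F : fieldType.

Definition mat (m n : nat) (t : seq (seq F)) : 'M[F]_(m, n) :=
  \matrix_(i < m, j < n) nth 0 (nth [::] t i) j.

(* Encoding matrices: X1, X2 are padded with a zero symbol (P); X3 is sent
   towards u1 through A and towards u2 through B.  Decoding matrices D1, D2, D3
   for t1, t2, t3. *)
Definition Pm := mat 2 3 [:: [:: 1; 0; 0]; [:: 0; 1; 0]].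
Definition Am := mat 2 3 [:: [:: 1; 0; 1]; [:: 0; 1; 0]].
Definition Bm := mat 2 3 [:: [:: 0; 0; -1]; [:: 1; 1; 1]].
Definition D1 := mat 3 2 [:: [:: 1; 0]; [:: 0; 1]; [:: 0; 0]].
Definition D2 := mat 3 2 [:: [:: 1; 0]; [:: 0; 1]; [:: -1; 0]].
Definition D3 := mat 3 2 [:: [:: 1; 0]; [:: 0; 1]; [:: -1; -1]].

Ltac mx_compute :=
  apply/matrixP => - [[|[|?]] ?] [[|[|?]] ?];
  rewrite !mxE !big_ord_recl !big_ord0 !mxE //=;
  rewrite ?(mulr0, mul0r, mulr1, mul1r, addr0, add0r, mulrN1, mulN1r,
            opprK, subrr, addrN, addNr) //.

(* The decoding identities: t1 receives X1 P + X3 A + X2 P, t2 receives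
   X2 P + X3 B + X1 P, t3 receives X1 P + X3 A + X2 P + X3 B. *)
Lemma PD1 : Pm *m D1 = 1%:M. Proof. mx_compute. Qed.
Lemma AD1 : Am *m D1 = 1%:M. Proof. mx_compute. Qed.
Lemma PD2 : Pm *m D2 = 1%:M. Proof. mx_compute. Qed.
Lemma BD2 : Bm *m D2 = 1%:M. Proof. mx_compute. Qed.
Lemma PD3 : Pm *m D3 = 1%:M. Proof. mx_compute. Qed.
Lemma ABD3 : Am *m D3 + Bm *m D3 = 1%:M. Proof. mx_compute. Qed.

Lemma mulmx_linear (m n p : nat) (M : 'M[F]_(n, p)) :
  is_linear_map (fun x : 'M[F]_(m, n) => x *m M).
Proof. by move=> a x z; rewrite mulmxDl scalemxAl. Qed.

(* Source encoding, shared by both networks: edge 1 is (s3,u1), edge 6 is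
   (s3,u2); every other source edge sends X_i P. *)
Definition enc_mx (m : nat) : 'M[F]_(2, 3) :=
  if m == 1%N then Am else if m == 6%N then Bm else Pm.

Definition enc23 (N : network) (e : edge N) (x : 'rV[F]_2) : 'rV[F]_3 :=
  x *m enc_mx (val e).

Definition fnS3 (e : edge S3) (w : {ffun edge S3 -> 'rV[F]_3}) : 'rV[F]_3 :=
  if val e == 2%N then w (E3 0) + w (E3 1)
  else if (val e == 3%N) || (val e == 4%N) then w (E3 2)
  else if val e == 7%N then w (E3 5) + w (E3 6) else w (E3 7).

Definition decS3 (j : 'I_(size (terminals S3)))
    (w : {ffun edge S3 -> 'rV[F]_3}) : 'rV[F]_2 :=
  if val j == 0%N then (w (E3 3) + w (E3 10)) *m D1
  else if val j == 1%N then (w (E3 8) + w (E3 11)) *m D2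
  else (w (E3 4) + w (E3 9)) *m D3.

Definition codeS3 : frac_code S3 F 2 3 := FracCode (@enc23 S3) fnS3 decS3.

Definition yS3 (X : messages S3 F 2) (e : edge S3) : 'rV[F]_3 :=
  let u1 := X i0 *m Pm in let a3 := X i2 *m Am in let a := u1 + a3 in
  let u2 := X i1 *m Pm in let b3 := X i2 *m Bm in let b := u2 + b3 in
  nth 0 [:: u1; a3; a; a; a; u2; b3; b; b; b; u2; u1] (val e).

Lemma codeS3_solves : solves codeS3 yS3.
Proof.
move=> X; split; [|split].
- by apply: S3_edge_cases; apply: ord3_cases.
- by apply: S3_edge_cases; rewrite /Defs.tail /= // /fnS3 /in_vals /= ?ffunE.
- apply: ord3_cases; rewrite /term /= /decS3 /in_vals /= ?ffunE /yS3 /= sum3.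
  + by rewrite !mulmxDl -!mulmxA PD1 AD1 !mulmx1 addrAC.
  + by rewrite !mulmxDl -!mulmxA PD2 BD2 !mulmx1 addrC addrA.
  + rewrite !mulmxDl -!mulmxA PD3 !mulmx1 addrACA -mulmxDr ABD3 mulmx1.
    by rewrite addrAC.
Qed.

Lemma codeS3_linear : is_linear_code codeS3.
Proof.
split; [|split].
- by move=> e; apply: mulmx_linear.
- move=> e a w w'; rewrite /= /fnS3.
  by repeat case: ifP => _; rewrite ?ffunE // scalerDr addrACA.
- move=> j a w w'; rewrite /= /decS3.
  by repeat case: ifP => _;
    rewrite ?ffunE /= addrACA -scalerDr mulmxDl scalemxAl.
Qed.

(* On S3', u3 forwards X2 P to t1 and t2 gets X1 P on the edge (s1,t2). *)
Definition fnS3' (e : edge S3') (w : {ffun edge S3' -> 'rV[F]_3}) : 'rV[F]_3 :=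
  if val e == 2%N then w (E3' 0) + w (E3' 1)
  else if (val e == 3%N) || (val e == 4%N) then w (E3' 2)
  else if val e == 7%N then w (E3' 5) + w (E3' 6)
  else if val e == 13%N then w (E3' 12) else w (E3' 7).

Definition decS3' (j : 'I_(size (terminals S3')))
    (w : {ffun edge S3' -> 'rV[F]_3}) : 'rV[F]_2 :=
  if val j == 0%N then (w (E3' 3) + w (E3' 13)) *m D1
  else if val j == 1%N then (w (E3' 8) + w (E3' 10)) *m D2
  else (w (E3' 4) + w (E3' 9)) *m D3.

Definition codeS3' : frac_code S3' F 2 3 := FracCode (@enc23 S3') fnS3' decS3'.

Definition yS3' (X : messages S3' F 2) (e : edge S3') : 'rV[F]_3 :=
  let u1 := X i0 *m Pm in let a3 := X i2 *m Am in let a := u1 + a3 in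
  let u2 := X i1 *m Pm in let b3 := X i2 *m Bm in let b := u2 + b3 in
  nth 0 [:: u1; a3; a; a; a; u2; b3; b; b; b; u1; u1; u2; u2; u1] (val e).

Lemma codeS3'_solves : solves codeS3' yS3'.
Proof.
move=> X; split; [|split].
- by apply: S3'_edge_cases; apply: ord3_cases.
- by apply: S3'_edge_cases; rewrite /Defs.tail /= // /fnS3' /in_vals /= ?ffunE.
- apply: ord3_cases; rewrite /term /= /decS3' /in_vals /= ?ffunE /yS3' /= sum3.
  + by rewrite !mulmxDl -!mulmxA PD1 AD1 !mulmx1 addrAC.
  + by rewrite !mulmxDl -!mulmxA PD2 BD2 !mulmx1 addrC addrA.
  + rewrite !mulmxDl -!mulmxA PD3 !mulmx1 addrACA -mulmxDr ABD3 mulmx1.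
    by rewrite addrAC.
Qed.

Lemma codeS3'_linear : is_linear_code codeS3'.
Proof.
split; [|split].
- by move=> e; apply: mulmx_linear.
- move=> e a w w'; rewrite /= /fnS3'.
  by repeat case: ifP => _; rewrite ?ffunE // scalerDr addrACA.
- move=> j a w w'; rewrite /= /decS3'.
  by repeat case: ifP => _;
    rewrite ?ffunE /= addrACA -scalerDr mulmxDl scalemxAl.
Qed.

Lemma two_thirds_linearly_achievable (N : network) :
  N = S3 \/ N = S3' -> linearly_achievable N F 2 3.
Proof.
case=> ->.
- by exists codeS3; split; [exact: codeS3_linear | exists yS3; exact: codeS3_solves].
- by exists codeS3'; split;
    [exact: codeS3'_linear | exists yS3'; exact: codeS3'_solves].
Qed.

End LinearCodes.

Theorem mainTheorem5 :
  (forall (G : finZmodType), (1 < #|G|)%N ->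
     forall N : network, N = S3 \/ N = S3' ->
     forall k l : nat, (0 < l)%N -> achievable N G k l ->
       (k%:R / l%:R : rat) <= 2%:R / 3%:R) /\
  (forall (F : finFieldType) (N : network), N = S3 \/ N = S3' ->
     is_sup_rate (achievable N F) (2%:R / 3%:R) /\
     is_sup_rate (linearly_achievable N F) (2%:R / 3%:R)).
Proof.
have upper (G : finZmodType) (N : network) (k l : nat) : (1 < #|G|)%N -> N = S3 \/ N = S3' -> (0 < l)%N ->
    achievable N G k l -> (k%:R / l%:R : rat) <= 2%:R / 3%:R.
  by move=> hG hN hl hach; exact: rate_le_two_thirds hl
    (achievable_rate_bound hG hN hach).
split=> [G hG N hN k l|F N hN]; first exact: upper.
have lach := two_thirds_linearly_achievable F hN.
have ach : achievable N F 2 3 by case: lach => c [_ hs]; exists c.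
have hF := finNzRing_gt1 F.
split; split.
- by move=> k l; exact: upper hF hN.
- by move=> d hd; exact: hd 2%N 3%N isT ach.
- by move=> k l hl [c [_ hs]]; apply: upper hF hN hl _; exists c.
- by move=> d hd; exact: hd 2%N 3%N isT lach.
Qed.
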